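(* Let $q=2^m$ and let $d>3$ be an odd integer, $f(x)=x^d$. Let $S_1$ and $S_2$ be the projective surfaces (cones) in $\mathbb{P}^3(\overline{\mathbb{F}}_q)$, with homogeneous coordinates $(x:y:z:t)$, defined by $P_f(x,y,z)=0$ and $P_f(x,y,t)=0$ respectively, and let $X=S_1\cap S_2$. Then $X$ has dimension 1, i.e. $X$ is a projective curve.
   Context: For $f(x)=x^d$, $P_f(x,y,z)$ denotes the homogeneous polynomial $\frac{x^d+y^d+z^d+(x+y+z)^d}{(x+y)(x+z)(y+z)}$ (the division is exact in characteristic 2), of degree $d-3$. *)

From HB Require Import structures.
From mathcomp Require Import all_boot all_order all_algebra all_field.
From mathcomp Require Import mpoly.
Set Implicit Arguments. Unset Strict Implicit. Unset Printing Implicit Defensive.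
Import Order.TTheory GRing.Theory.
Local Open Scope ring_scope.

Definition Pnum (F : comNzRingType) (d : nat) : {mpoly F[3]} :=
  'X_(0 : 'I_3) ^+ d + 'X_(1 : 'I_3) ^+ d + 'X_(2 : 'I_3) ^+ d
  + ('X_(0 : 'I_3) + 'X_(1 : 'I_3) + 'X_(2 : 'I_3)) ^+ d.
Definition Pden (F : comNzRingType) : {mpoly F[3]} :=
  ('X_(0 : 'I_3) + 'X_(1 : 'I_3)) * ('X_(0 : 'I_3) + 'X_(2 : 'I_3))
  * ('X_(1 : 'I_3) + 'X_(2 : 'I_3)).

(* P is P_f(x,y,z) exactly when P * (x+y)(x+z)(y+z) = numerator
   (the quotient is unique since F[x,y,z] is a domain). *)
Definition is_Pf (F : comNzRingType) (d : nat) (P : {mpoly F[3]}) : Prop :=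
  P * Pden F = Pnum F d.

Definition ev3 (F : comNzRingType) (P : {mpoly F[3]}) (a b c : F) : F :=
  P.@[fun i : 'I_3 => [:: a; b; c]`_i].

(* A subset of P^n is
   represented by its affine cone X : pred 'rV[F]_(n.+1) (only nonzero
   vectors matter).  A projective linear subspace of projective dimension k
   is the row space of a row-free (k+1) x (n+1) matrix.
   Definition (standard, e.g. Shafarevich I.6 / Harris Lect. 11):
   dim X = r  iff  some linear subspace of dimension n-r-1 misses X and
   every linear subspace of dimension n-r meets X. *)
Definition meets (F : fieldType) (n k : nat) (X : pred 'rV[F]_(n.+1))
  (A : 'M[F]_(k, n.+1)) : Prop :=
  exists v : 'rV[F]_(n.+1), [/\ v != 0, (v <= A)%MS & X v].

Definition proj_dim (F : fieldType) (n : nat) (X : pred 'rV[F]_(n.+1))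
  (r : nat) : Prop :=
  [/\ (r <= n)%N,
      (exists A : 'M[F]_(n - r, n.+1), row_free A /\ ~ meets X A)
    & (forall A : 'M[F]_((n - r).+1, n.+1), row_free A -> meets X A)].

Definition Xset (F : comNzRingType) (P : {mpoly F[3]}) : pred 'rV[F]_4 :=
  fun v => (ev3 P (v 0 0) (v 0 1) (v 0 2) == 0)
        && (ev3 P (v 0 0) (v 0 1) (v 0 3) == 0).

From HB Require Import structures.
From mathcomp Require Import all_boot all_order all_algebra all_field.
From mathcomp Require Import mpoly.
From mathcomp Require Import ring zify.
Set Implicit Arguments. Unset Strict Implicit. Unset Printing Implicit Defensive.
Import Order.TTheory GRing.Theory.
Local Open Scope ring_scope.

(* P = P_f is homogeneous of degree d - 3 > 0, and P(0,0,1) = d = 1 in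
   characteristic 2, so P(0,0,z) = z^(d-3) vanishes only at z = 0: the line
   x = y = 0 misses X.  Conversely any plane meets the plane z = t in at least a
   projective line, on which X is cut out by the single form P(x,y,z); a form of
   positive degree has a zero on every projective line over an algebraically
   closed field. *)

Lemma rmorph_mmap n (R S T : nzRingType) (g : {rmorphism S -> T})
    (f : R -> S) (f' : R -> T) (h : 'I_n -> S) (h' : 'I_n -> T) (p : {mpoly R[n]}) :
  g \o f =1 f' -> g \o h =1 h' -> g (mmap f h p) = mmap f' h' p.
Proof.
move=> gf gh; rewrite /mmap rmorph_sum; apply: eq_bigr => m _.
rewrite rmorphM -gf /mmap1 rmorph_prod; congr (_ * _); apply: eq_bigr => i _.
by rewrite rmorphXn -gh.
Qed.

Lemma horner_mmap n (R : comNzRingType) (h : 'I_n -> {poly R}) (p : {mpoly R[n]}) x :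
  (mmap polyC h p).[x] = p.@[fun i => (h i).[x]].
Proof.
rewrite -[LHS]/(horner_eval x _) (rmorph_mmap _ (f' := idfun) (h' := fun i => (h i).[x])) //.
by move=> c; rewrite /= /horner_eval hornerC.
Qed.

Lemma mmap_Pf (F S : comNzRingType) (f : {rmorphism F -> S}) (h : 'I_3 -> S) d P :
  is_Pf d P ->
  mmap f h P * ((h 0 + h 1) * (h 0 + h 2) * (h 1 + h 2))
  = h 0 ^+ d + h 1 ^+ d + h 2 ^+ d + (h 0 + h 1 + h 2) ^+ d.
Proof.
have mmapXU i : mmap f h 'X_i = h i by rewrite mmapX mmap1U.
move=> hP; rewrite -!mmapXU -!rmorphD -!rmorphM -[_ * _]/(P * Pden F) hP.
by rewrite -!rmorphXn -!rmorphD.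
Qed.

Lemma Pden_neq0 (F : idomainType) : Pden F != 0.
Proof.
have XD_neq0 (i j : 'I_3) : i != j -> 'X_i + 'X_j != 0 :> {mpoly F[3]}.
  move=> ij; apply/eqP => /(congr1 (mcoeff U_(i))).
  by rewrite mcoeffD !mcoeffXU eqxx eq_sym (negbTE ij) addr0 mcoeff0 => /eqP; rewrite oner_eq0.
by rewrite /Pden !mulf_neq0 ?XD_neq0.
Qed.

Lemma Pf_homog (F : idomainType) d P (l : F) (v : 'I_3 -> F) :
  is_Pf d P -> (3 <= d)%N -> l != 0 ->
  P.@[fun i => l * v i] = l ^+ (d - 3) * P.@[v].
Proof.
move=> hP hd l0; pose lq := [tuple l%:MP * 'X_i | i < 3].
(* [P] is only known through [P * Pden = Pnum]: scaling the variables by [l]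
   multiplies [Pden] by [l ^+ 3] and [Pnum] by [l ^+ d], and [Pden] cancels in
   the domain [F[x, y, z]]. *)
have scaled : (l ^+ 3)%:MP * (P \mPo lq) = (l ^+ d)%:MP * P.
  apply: (mulIf (Pden_neq0 F)).
  have := mmap_Pf (mpolyC 3 (R := F)) (tnth lq) hP; rewrite !tnth_mktuple.
  rewrite -!mulrDr !exprMn -!mulrDr => E.
  rewrite !rmorphXn -[RHS]mulrA hP -E /comp_mpoly /Pden; ring.
have := congr1 (meval v) scaled; rewrite [LHS]mevalM [RHS]mevalM !mevalC.
rewrite comp_mpoly_meval.
rewrite (@meval_eq _ _ (fun i => (tnth lq i).@[v]) (fun i => l * v i)); last first.
  by move=> i; rewrite tnth_mktuple mevalM mevalC mevalXU.
rewrite -[in l ^+ d](subnKC hd) exprD -mulrA => scaled_v.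
by apply: (mulfI (expf_neq0 3 l0)); rewrite mulrA -scaled_v; ring.
Qed.

Lemma coef1_deriv (R : nzRingType) (p : {poly R}) : p`_1 = p^`().[0].
Proof. by rewrite horner_coef0 coef_deriv mulr1n. Qed.

Lemma Pf_001 (F : comNzRingType) d (P : {mpoly F[3]}) :
  is_Pf d P -> (1 < d)%N -> odd d -> 2%N \in [pchar F] -> ev3 P 0 0 1 = 1.
Proof.
move=> hP hd hodd hchar.
pose p := mmap polyC (fun i : 'I_3 => [:: 0; 'X; 1]`_i : {poly F}) P.
have E : ('X : {poly F}) * (p * ('X + 1)) = 'X ^+ d + 1 + ('X + 1) ^+ d.
  have := mmap_Pf polyC (fun i : 'I_3 => [:: 0; 'X; 1]`_i : {poly F}) hP.
  rewrite /= !add0r expr0n expr1n eqn0Ngt ltnW //= add0r -/p => <-; ring.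
(* Compare coefficients of ['X]: [p(0)] on the left, [d = 1] on the right. *)
have p0 : p`_0 = 1.
  have := congr1 (fun q : {poly F} => q`_1) E.
  rewrite coefXM /= coef0M coefD coefX coef1 add0r mulr1 => ->.
  rewrite coef1_deriv !derivE deriv_exp !derivE !hornerE !hornerMn !hornerE.
  rewrite expr0n expr1n -subn1 subn_eq0 leqNgt hd mul0rn add0r.
  by rewrite -(GRing.natr_mod_pchar hchar) modn2 hodd.
rewrite -[RHS]p0 -horner_coef0 horner_mmap; apply: meval_eq.
by case=> [[|[|[|//]]] ?] /=; rewrite hornerE.
Qed.

Definition line_poly n (R : comNzRingType) (p : {mpoly R[n]}) (u w : 'I_n -> R) : {poly R} :=
  mmap polyC (fun i => (u i)%:P + 'X * (w i)%:P) p.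

Lemma horner_line_poly n (R : comNzRingType) (p : {mpoly R[n]}) u w s :
  (line_poly p u w).[s] = p.@[fun i => u i + s * w i].
Proof. by rewrite horner_mmap; apply: meval_eq => i; rewrite !hornerE. Qed.

Lemma closed_poly_eq_nonzero (F : closedFieldType) (p q : {poly F}) :
  (forall x, x != 0 -> p.[x] = q.[x]) -> p = q.
Proof.
have X0 : 'X != 0 :> {poly F} by rewrite polyX_eq0.
move=> pq; apply/(mulIf X0)/eqP; rewrite -subr_eq0 -mulrBl.
apply: contraT => /closed_nonrootP [x]; rewrite /root !hornerE.
by have [->|/pq->] := eqVneq x 0; rewrite ?mulr0 ?subrr ?mul0r eqxx.
Qed.

Section HomogeneousZeros.
Variables (F : closedFieldType) (n e : nat) (p : {mpoly F[n]}).
Hypothesis e_gt0 : (0 < e)%N.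
Hypothesis p_homog : forall l v, l != 0 -> p.@[fun i => l * v i] = l ^+ e * p.@[v].

Lemma homog_root_on_line u w :
  (exists s, p.@[fun i => u i + s * w i] = 0) \/ p.@[w] = 0.
Proof.
have [/closed_rootP [s]|] := boolP (size (line_poly p u w) != 1).
  by rewrite /root horner_line_poly => /eqP ps; left; exists s.
rewrite negbK => /size_poly1P [c _ pc]; right.
have {}pc s : p.@[fun i => u i + s * w i] = c by rewrite -horner_line_poly pc hornerC.
(* If [p] is constant [c] on the line [u + s w], then homogeneity gives
   [p (w + r u) = c r ^+ e] for [r != 0], hence also at [r = 0]. *)
have rev : line_poly p w u = c%:P * 'X ^+ e.
  apply: closed_poly_eq_nonzero => r r0; rewrite horner_line_poly !hornerE -(pc r^-1).
  rewrite mulrC -p_homog //; apply: meval_eq => i.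
  by rewrite mulrDr mulrA divff // mul1r addrC.
have := horner_line_poly p w u 0; rewrite rev !hornerE expr0n gtn_eqF // mulr0.
by move=> ->; apply: meval_eq => i; rewrite mul0r addr0.
Qed.

End HomogeneousZeros.

Lemma mxrank_gt1_independent (F : fieldType) m n (C : 'M[F]_(m, n)) :
  (1 < \rank C)%N ->
  exists u w : 'rV_n, [/\ (u <= C)%MS, (w <= C)%MS, w != 0 & ~~ (u <= w)%MS].
Proof.
move=> rC.
have [i0 Ci0] : exists i, ~~ (row i C <= (0 : 'rV_n))%MS.
  by apply/row_subPn/negP => /submx0null C0; rewrite C0 mxrank0 in rC.
have [i1 Ci1] : exists i, ~~ (row i C <= row i0 C)%MS.
  apply/row_subPn; apply: contraL rC => /mxrankS; rewrite -leqNgt.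
  by move/leq_trans; apply; apply: rank_leq_row.
exists (row i1 C), (row i0 C); split; rewrite ?row_sub //.
by apply: contraNneq Ci0 => ->; rewrite sub0mx.
Qed.

Section Lines.
Variable F : fieldType.

(* Row spaces: [line_x0y0] spans the line [x = y = 0], [plane_zt] the plane [z = t]. *)
Definition line_x0y0 : 'M[F]_(2, 4) := \matrix_(i < 2, j < 4) ((j : nat) == i + 2)%N%:R.
Definition plane_zt : 'M[F]_(3, 4) :=
  \matrix_(i < 3, j < 4) (if (i : nat) == 2 then (2 <= j)%N else (j : nat) == i)%:R.

Lemma row_free_line_x0y0 : row_free line_x0y0.
Proof.
apply/row_freeP; exists (\matrix_(j < 4, i < 2) ((j : nat) == i + 2)%N%:R).
apply/matrixP => i j; rewrite !mxE !big_ord_recr big_ord0 /= !mxE.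
case: i => [[|[|?]] ?]; case: j => [[|[|?]] ?] //=.
all: by rewrite ?(mul0r, mulr0, mulr1, add0r, addr0).
Qed.

Lemma row_free_plane_zt : row_free plane_zt.
Proof.
apply/row_freeP; exists (\matrix_(j < 4, i < 3) ((j : nat) == i)%N%:R).
apply/matrixP => i j; rewrite !mxE !big_ord_recr big_ord0 /= !mxE.
case: i => [[|[|[|?]]] ?]; case: j => [[|[|[|?]]] ?] //=.
all: by rewrite ?(mul0r, mulr0, mulr1, add0r, addr0).
Qed.

Lemma mul_line_x0y0 (D : 'rV[F]_2) k : (D *m line_x0y0) 0 k = [:: 0; 0; D 0 0; D 0 1]`_k.
Proof.
rewrite !mxE !big_ord_recr big_ord0 /= !mxE.
case: k => [[|[|[|[|?]]]] ?] //=; rewrite ?(mul0r, mulr0, mulr1, add0r, addr0).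
all: rewrite ?mulr0n ?mulr1n //; congr (D _ _); exact: val_inj.
Qed.

Lemma sub_plane_zt (v : 'rV[F]_4) : (v <= plane_zt)%MS -> v 0 2 = v 0 3.
Proof.
case/submxP => D ->; rewrite !mxE !big_ord_recr big_ord0 /= !mxE /=.
by rewrite big_ord0 ?(mul0r, mulr0, mulr1, add0r, addr0).
Qed.

End Lines.

Section Xset.
Variables (F : closedFieldType) (d : nat) (P : {mpoly F[3]}).
Hypotheses (hP : is_Pf d P) (hd : (3 < d)%N).

(* [A] meets the plane [z = t] in a subspace of rank at least 2, on which both
   equations of [X] reduce to [P(x, y, z) = 0]. *)
Lemma meets_plane (A : 'M[F]_(3, 4)) : row_free A -> meets (Xset P) A.
Proof.
move=> freeA; set C := (A :&: plane_zt F)%MS.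
have rC : (1 < \rank C)%N.
  have := mxrank_sum_cap A (plane_zt F); move/eqP: freeA => ->.
  move/eqP: (row_free_plane_zt F) => ->; have := rank_leq_col (A + plane_zt F)%MS.
  by rewrite -/C; lia.
have [u [w [uC wC w0 uw]]] := mxrank_gt1_independent rC.
pose pt (v : 'rV[F]_4) (i : 'I_3) := [:: v 0 0; v 0 1; v 0 2]`_i.
have meetsC v : v != 0 -> (v <= C)%MS -> P.@[pt v] = 0 -> meets (Xset P) A.
  move=> v0; rewrite sub_capmx => /andP [vA /sub_plane_zt v23] Pv.
  by exists v; split=> //; rewrite /Xset -v23; apply/andP; split; apply/eqP.
have Phomog l v : l != 0 -> P.@[fun i => l * v i] = l ^+ (d - 3) * P.@[v].
  exact: Pf_homog (ltnW hd).
have d3_gt0 : (0 < d - 3)%N by rewrite subn_gt0.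
have [[s Ps]|Pw] := homog_root_on_line d3_gt0 Phomog (pt u) (pt w).
  apply: (meetsC (u + s *: w)).
  - apply: contra uw => /eqP us.
    by rewrite -(addrK (s *: w) u) us sub0r -scaleNr scalemx_sub.
  - by rewrite addmx_sub ?scalemx_sub.
  - by rewrite -Ps; apply: meval_eq; case=> [[|[|[|//]]] ?]; rewrite /pt /= !mxE.
exact: meetsC w0 wC Pw.
Qed.

Hypotheses (hodd : odd d) (hchar : 2%N \in [pchar F]).

Lemma Pf_00z z : z != 0 -> ev3 P 0 0 z = z ^+ (d - 3).
Proof.
move=> z0; rewrite -[RHS]mulr1 -(Pf_001 hP (ltnW (ltnW hd)) hodd hchar).
rewrite -Pf_homog ?(ltnW hd) //; apply: meval_eq.
by case=> [[|[|[|//]]] ?] /=; rewrite ?mulr0 ?mulr1.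
Qed.

Lemma not_meets_line_x0y0 : ~ meets (Xset P) (line_x0y0 F).
Proof.
have Pz_eq0 z : ev3 P 0 0 z = 0 -> z = 0.
  by apply: contra_eq => z0; rewrite Pf_00z // expf_neq0.
case=> v [v0 /submxP [D vD]]; rewrite /Xset vD !mul_line_x0y0 /=.
case/andP => /eqP/Pz_eq0 D0 /eqP/Pz_eq0 D1; move/eqP: v0; apply.
by rewrite vD; apply/rowP => k; rewrite mul_line_x0y0 mxE D0 D1; case: k => [[|[|[|[|?]]]] ?].
Qed.

End Xset.

Theorem lemma3p1 (m : nat) (F : closedFieldType)
  (hm : (0 < m)%N)
  (hchar : 2%N \in [pchar F])
  (halg : forall x : F, exists k : nat, (0 < k)%N /\ x ^+ (2 ^ k) = x)
  (d : nat) (hd_odd : odd d) (hd : (3 < d)%N)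
  (P : {mpoly F[3]}) (hP : is_Pf d P) :
  proj_dim (Xset P) 1.
Proof.
split=> //; last exact: meets_plane hP hd.
exists (line_x0y0 F); split; first exact: row_free_line_x0y0.
exact: not_meets_line_x0y0 hP hd hd_odd hchar.
Qed.
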